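(* Let $G$ be a digraph on $n$ vertices and let $\mathcal{P}=\{V_{ij}:i,j\in[2]\}$ be a $4$-partition of $V(G)$ with $|V_{12}|=|V_{21}|>0$. Suppose that for every $i\in[2]$ and every proper $i$-pair $\phi^i$ with respect to $\mathcal{P}$, the digraph $\mathcal{J}^i(\mathcal{P},G,\phi^i)$ contains a Hamilton cycle. Then $G$ contains a Hamilton cycle.
   Context: A $4$-partition of $V(G)$ is a family $\{V_{ij}:i,j\in[2]\}$ of pairwise disjoint (possibly empty) sets with union $V(G)$; $V_{i*}=V_{i1}\cup V_{i2}$, $V_{*i}=V_{1i}\cup V_{2i}$. Let $t=|V_{12}|=|V_{21}|$ and treat $[t]=\{1,\dots,t\}$ as a set disjoint from $V(G)$. For $i\in[2]$, a proper $i$-pair with respect to $\mathcal{P}$ is a pair $\phi^i=(\phi_{i*},\phi_{*i})$ of bijections $\phi_{i*}:[t]\cup V_{ii}\to V_{i*}$ and $\phi_{*i}:[t]\cup V_{ii}\to V_{*i}$ with $\phi_{i*}(x)=\phi_{*i}(x)=x$ for all $x\in V_{ii}$. The digraph $\mathcal{J}^i(\mathcal{P},G,\phi^i)$ has vertex set $[t]\cup V_{ii}$, and for $a,b$ in this set, $ab$ is an edge (a loop if $a=b$) iff $\phi_{i*}(a)\phi_{*i}(b)\in E(G)$. A Hamilton cycle is a directed cycle through all vertices (loops play no role). *)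

From mathcomp Require Import all_boot.
Set Implicit Arguments. Unset Strict Implicit. Unset Printing Implicit Defensive.

(* the two indices of [2]: idx1 = 1, idx2 = 2 *)
Definition idx1 : 'I_2 := @Ordinal 2 0 isT.
Definition idx2 : 'I_2 := @Ordinal 2 1 isT.

Section Defs.
Variable V : finType.

Definition four_partition (P : 'I_2 -> 'I_2 -> {set V}) : Prop :=
  (forall i j k l : 'I_2, (i, j) != (k, l) -> [disjoint P i j & P k l]) /\
  (forall x : V, exists i j, x \in P i j).

Definition Vrow (P : 'I_2 -> 'I_2 -> {set V}) (i : 'I_2) : {set V} :=
  P i idx1 :|: P i idx2.
Definition Vcol (P : 'I_2 -> 'I_2 -> {set V}) (i : 'I_2) : {set V} :=
  P idx1 i :|: P idx2 i.

(* The vertex set [t] \cup A, with [t] a copy disjoint from V. *)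
Definition Jdom (t : nat) (A : {set V}) : finType :=
  ('I_t + {x : V | x \in A})%type.

Definition bij_onto (D : finType) (f : D -> V) (B : {set V}) : Prop :=
  [/\ injective f, forall u, f u \in B & forall x, x \in B -> exists u, f u = x].

Definition proper_pair (P : 'I_2 -> 'I_2 -> {set V}) (i : 'I_2)
    (f g : Jdom #|P idx1 idx2| (P i i) -> V) : Prop :=
  [/\ bij_onto f (Vrow P i), bij_onto g (Vcol P i)
    & forall x : {x : V | x \in P i i}, f (inr x) = val x /\ g (inr x) = val x].

Definition Jrel (E : rel V) (D : finType) (f g : D -> V) : rel D :=
  fun a b => E (f a) (g b).
End Defs.

Arguments proper_pair {V} P i f g.
Arguments Jrel {V} E {D} f g.
Arguments bij_onto {V D} f B.

Definition hamiltonian (T : finType) (e : rel T) : Prop :=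
  exists s : seq T, [/\ uniq s, forall x, x \in s & cycle e s].

From mathcomp Require Import all_boot.
Set Implicit Arguments. Unset Strict Implicit. Unset Printing Implicit Defensive.

(* Take the proper 2-pair that maps [t] onto V_21 and onto V_12 by fixed
   enumerations a and b. A Hamilton cycle of J^2, cut at its visits to [t],
   splits into G-paths from a k through V_22 to b (pi k), where pi, the
   first-return map of the cycle to [t], is injective. So k |-> b (pi k) and
   k |-> a k form a proper 1-pair. In a Hamilton cycle of J^1 each edge into
   some k in [t] is a G-edge into a k, which the J^2 path continues to
   b (pi k), the vertex k stands for on the row side; splicing these paths into
   the J^1 cycle gives one cycle of G through every vertex. *)

Section HamiltonSuccessor.
Variables (T : finType) (e : rel T).

Lemma hamiltonian_successor : hamiltonian e ->
  exists n : T -> T,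
    [/\ injective n, forall x, e x (n x) & forall x y, fconnect n x y].
Proof.
move=> [s [s_uniq s_all s_cycle]]; exists (next s); split.
- exact: can_inj (prev_next s_uniq).
- by move=> x; apply: next_cycle.
- by move=> x y; rewrite (fconnect_cycle (cycle_next s_uniq) (s_all x)).
Qed.

Lemma successor_hamiltonian (n : T -> T) (c : T) :
  (forall x, e x (n x)) -> (forall y, fconnect n c y) -> fconnect n (n c) c ->
  hamiltonian e.
Proof.
move=> n_edge c_all; rewrite fconnect_f => c_cycle; exists (orbit n c); split.
- exact: orbit_uniq.
- by move=> x; rewrite -fconnect_orbit.
- by apply: sub_cycle c_cycle => x y /eqP <-.
Qed.

End HamiltonSuccessor.

Lemma fconnect_ind (T : finType) (n : T -> T) (Q : T -> Prop) x y :
  Q x -> (forall z, Q z -> Q (n z)) -> fconnect n x y -> Q y.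
Proof. by move=> Qx Qn /iter_findex <-; elim: (findex _ _ _) => //= i /Qn. Qed.
Arguments fconnect_ind {T n} Q {x y}.

Section FirstReturn.
Variables (T : finType) (n : T -> T) (p : pred T).
Hypothesis n_inj : injective n.

(* Meaningful only when the orbit of [x] meets [p], e.g. when [p x] holds. *)
Definition return_time x := (find p (orbit n (n x))).+1.
Definition first_return x := iter (return_time x) n x.

Lemma before_return x i : 0 < i < return_time x -> ~~ p (iter i n x).
Proof.
case: i => // i /andP[_]; rewrite ltnS => lt_i.
have lt_i_order : i < order n (n x).
  by apply: leq_trans lt_i _; rewrite -size_orbit find_size.
by rewrite iterSr -(nth_traject _ lt_i_order) before_find.
Qed.

Lemma first_returnP x : p x -> p (first_return x).
Proof.
move=> px; have p_orbit : has p (orbit n (n x)).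
  by apply/hasP; exists x; rewrite // -fconnect_orbit fconnect_sym ?fconnect1.
have lt_find : find p (orbit n (n x)) < order n (n x).
  by rewrite -size_orbit -has_find.
by rewrite /first_return /return_time iterSr -(nth_traject _ lt_find) nth_find.
Qed.

Lemma first_return_inj : {in p &, injective first_return}.
Proof.
have iter_inj i : injective (iter i n).
  by elim: i => [|i IH] x y //= /n_inj /IH.
move=> x y px py; wlog le_xy : x y px py / return_time x <= return_time y.
  move=> wlog_le eq_xy; case/orP: (leq_total (return_time x) (return_time y)).
    by move=> le_xy; apply: wlog_le.
  by move=> le_yx; apply/esym/wlog_le.
rewrite /first_return -(subnKC le_xy) iterD => /iter_inj x_eq.
case: (posnP (return_time y - return_time x)) => [d0|d_gt0].
  by rewrite x_eq d0.
have := @before_return y (return_time y - return_time x).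
by rewrite d_gt0 ltn_subrL /= -x_eq => /(_ isT) /negP[].
Qed.

Lemma fconnect_first_return (U : finType) (m : U -> U) (F G : T -> U) :
  (forall x, m (F x) = G (n x)) -> {in predC p, F =1 G} ->
  forall x, fconnect m (F x) (G (first_return x)).
Proof.
move=> mFG eqFG x; suff iter_m i : 0 < i <= return_time x ->
    iter i m (F x) = G (iter i n x).
  by rewrite /first_return -iter_m ?fconnect_iter //= leqnn.
elim: i => // [[_|i IH] lt_i]; first exact: mFG.
rewrite iterS IH ?(ltnW lt_i) // -eqFG ?mFG //.
by apply: before_return; rewrite lt_i.
Qed.

End FirstReturn.

Definition is_inl {A B : Type} (s : A + B) : bool := if s is inl _ then true else false.

Section Glue.
Variables (V D1 D2 : finType) (f1 k1 : D1 -> V) (f2 k2 : D2 -> V).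

Definition glue (u : V) : V :=
  if [pick d | f1 d == u] is Some d then k1 d
  else if [pick d | f2 d == u] is Some d then k2 d else u.

Lemma glue1 d : injective f1 -> glue (f1 d) = k1 d.
Proof.
move=> f1_inj; rewrite /glue; case: pickP => [d' /eqP /f1_inj -> //|no_d].
by have := no_d d; rewrite eqxx.
Qed.

Lemma glue2 d :
  injective f2 -> (forall d1 d2, f1 d1 != f2 d2) -> glue (f2 d) = k2 d.
Proof.
move=> f2_inj f12; rewrite /glue; case: pickP => [d' /eqP f12_eq|_].
  by have := f12 d' d; rewrite f12_eq eqxx.
case: pickP => [d' /eqP /f2_inj -> //|no_d].
by have := no_d d; rewrite eqxx.
Qed.

End Glue.

Section Jmap.
Variables (V : finType) (t : nat) (A : {set V}).

Definition Jmap (h : 'I_t -> V) (d : Jdom t A) : V :=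
  match d with inl k => h k | inr x => val x end.

Lemma bij_onto_Jmap (B : {set V}) (h : 'I_t -> V) :
  injective h -> (forall k, h k \in B) -> #|B| = t -> [disjoint A & B] ->
  bij_onto (Jmap h) (B :|: A).
Proof.
move=> h_inj hB card_B disj_AB; split.
- have hA k (x : {x | x \in A}) : h k <> val x.
    by move=> hx; have := disjointFr disj_AB (valP x); rewrite -hx hB.
  by move=> [k|x] [k'|x'] //= => [/h_inj -> | /hA | /esym/hA | /val_inj ->].
- by move=> [k|x]; rewrite in_setU ?hB ?(valP x) ?orbT.
- move=> x; rewrite in_setU => /orP [xB|xA]; last by exists (inr (Sub x xA)).
  have im_h : [set h k | k in 'I_t] = B.
    apply/eqP; rewrite eqEcard card_imset // card_ord card_B leqnn andbT.
    by apply/subsetP => _ /imsetP [k _ ->].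
  by move: xB; rewrite -im_h => /imsetP [k _ ->]; exists (inl k).
Qed.

End Jmap.

Lemma ord2P (i : 'I_2) : i = idx1 \/ i = idx2.
Proof. by case: i => [[|[|//]] lt_i]; [left | right]; apply: val_inj. Qed.

Section Proposition.
Variables (V : finType) (E : rel V) (P : 'I_2 -> 'I_2 -> {set V}).
Hypotheses (P_part : four_partition P) (t_eq : #|P idx1 idx2| = #|P idx2 idx1|).
Local Notation t := #|P idx1 idx2|.
Local Notation J1 := (Jdom t (P idx1 idx1)).
Local Notation J2 := (Jdom t (P idx2 idx2)).

Lemma P_disjoint i j k l : (i, j) != (k, l) -> [disjoint P i j & P k l].
Proof. exact: P_part.1. Qed.

Lemma Vrow_disjoint x : x \in Vrow P idx1 -> x \in Vrow P idx2 = false.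
Proof.
rewrite !inE => /orP[] x1; apply/negbTE.
  by rewrite negb_or !(disjointFr (P_disjoint _) x1).
by rewrite negb_or !(disjointFr (P_disjoint _) x1).
Qed.

Lemma Vrow_cover x : (x \in Vrow P idx1) || (x \in Vrow P idx2).
Proof.
have [i [j]] := P_part.2 x.
by case: (ord2P i) (ord2P j) => [|] -> [|] -> xP; rewrite !inE xP ?orbT.
Qed.

Lemma Vcol_cover x : (x \in Vcol P idx1) || (x \in Vcol P idx2).
Proof.
have [i [j]] := P_part.2 x.
by case: (ord2P i) (ord2P j) => [|] -> [|] -> xP; rewrite !inE xP ?orbT.
Qed.

Definition enum21 (k : 'I_t) : V := enum_val (cast_ord t_eq k).
Definition enum12 (k : 'I_t) : V := enum_val k.

Lemma enum21P k : enum21 k \in P idx2 idx1. Proof. exact: enum_valP. Qed.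
Lemma enum12P k : enum12 k \in P idx1 idx2. Proof. exact: enum_valP. Qed.

Lemma enum21_inj : injective enum21.
Proof. by move=> k k' /enum_val_inj /cast_ord_inj. Qed.
Lemma enum12_inj : injective enum12. Proof. exact: enum_val_inj. Qed.

Definition f2 : J2 -> V := Jmap enum21.
Definition g2 : J2 -> V := Jmap enum12.

Lemma proper_pair2 : proper_pair P idx2 f2 g2.
Proof.
split=> //; apply: bij_onto_Jmap; rewrite ?P_disjoint -?t_eq //.
- exact: enum21_inj.
- exact: enum21P.
- exact: enum12_inj.
- exact: enum12P.
Qed.

Variable n2 : J2 -> J2.
Hypothesis n2_inj : injective n2.

Definition exit12 (k : 'I_t) : V := g2 (first_return n2 is_inl (inl k)).

Lemma exit12P k : exit12 k \in P idx1 idx2.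
Proof.
rewrite /exit12; have := first_returnP n2_inj (p := is_inl) (x := inl k) isT.
by case: (first_return _ _ _) => // j _; apply: enum12P.
Qed.

Lemma exit12_inj : injective exit12.
Proof.
have [_ [g2_inj _ _] _] := proper_pair2.
move=> k k' /g2_inj eq_return.
by case: (first_return_inj n2_inj (x := inl k) (y := inl k') isT isT eq_return).
Qed.

Definition f1 : J1 -> V := Jmap exit12.
Definition g1 : J1 -> V := Jmap enum21.

Lemma proper_pair1 : proper_pair P idx1 f1 g1.
Proof.
split=> //; rewrite /Vrow /Vcol setUC;
  apply: bij_onto_Jmap; rewrite ?P_disjoint -?t_eq //.
- exact: exit12_inj.
- exact: exit12P.
- exact: enum21_inj.
- exact: enum21P.
Qed.

Hypotheses (n2_edge : forall x, Jrel E f2 g2 x (n2 x))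
           (n2_conn : forall x y, fconnect n2 x y).
Variable n1 : J1 -> J1.
Hypotheses (n1_inj : injective n1) (n1_edge : forall x, Jrel E f1 g1 x (n1 x))
           (n1_conn : forall x y, fconnect n1 x y).

Definition succG : V -> V := glue f1 (g1 \o n1) f2 (g2 \o n2).

Lemma succG_f1 d : succG (f1 d) = g1 (n1 d).
Proof. by have [[f1_inj _ _] _ _] := proper_pair1; rewrite /succG glue1. Qed.

Lemma succG_f2 d : succG (f2 d) = g2 (n2 d).
Proof.
have [[_ f1_in _] _ _] := proper_pair1; have [[f2_inj f2_in _] _ _] := proper_pair2.
rewrite /succG glue2 // => d1 d2; apply/eqP => eq_f.
by have := f2_in d2; rewrite -eq_f Vrow_disjoint ?f1_in.
Qed.

Lemma succG_edge u : E u (succG u).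
Proof.
have [[_ _ f1_onto] _ _] := proper_pair1; have [[_ _ f2_onto] _ _] := proper_pair2.
case/orP: (Vrow_cover u) => [/f1_onto [d <-] | /f2_onto [d <-]].
  by rewrite succG_f1; apply: n1_edge.
by rewrite succG_f2; apply: n2_edge.
Qed.

Lemma fconnect_g1_f1 b : fconnect succG (g1 b) (f1 b).
Proof.
case: b => [k|x]; last exact: connect0.
by apply: fconnect_first_return succG_f2 _ (inl k); case.
Qed.

Lemma fconnect_f1_f1 a b : fconnect succG (f1 a) (f1 b).
Proof.
apply: (fconnect_ind (fun b => fconnect succG (f1 a) (f1 b)) _ _ (n1_conn a b)).
  exact: connect0.
move=> c reach_c; apply: connect_trans reach_c (connect_trans (fconnect1 _ _) _).
by rewrite succG_f1; apply: fconnect_g1_f1.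
Qed.

Lemma fconnect_f1_g1 a b : fconnect succG (f1 a) (g1 b).
Proof.
rewrite -(f_finv n1_inj b) -succG_f1.
exact: connect_trans (fconnect_f1_f1 a _) (fconnect1 _ _).
Qed.

Hypothesis t_gt0 : 0 < t.

Lemma fconnect_f1_g2 a b : fconnect succG (f1 a) (g2 b).
Proof.
have [[_ _ f1_onto] _ _] := proper_pair1; pose k0 := Ordinal t_gt0.
apply: (fconnect_ind (fun b => fconnect succG (f1 a) (g2 b)) _ _ (n2_conn (inl k0) b)).
  have [d0 <-] : exists d0, f1 d0 = g2 (inl k0).
    by apply: f1_onto; rewrite !inE enum12P orbT.
  exact: fconnect_f1_f1.
move=> c reach_c; rewrite -succG_f2; apply: connect_trans (fconnect1 _ _).
by case: c reach_c => [j|w] reach_c //; apply: (fconnect_f1_g1 a (inl j)).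
Qed.

Lemma succG_hamiltonian : hamiltonian E.
Proof.
have [_ [_ _ g1_onto] _] := proper_pair1; have [_ [_ _ g2_onto] _] := proper_pair2.
pose a0 : J1 := inl (Ordinal t_gt0).
apply: (successor_hamiltonian succG_edge (c := f1 a0)).
  move=> u; case/orP: (Vcol_cover u) => [/g1_onto [b <-] | /g2_onto [b <-]].
    exact: fconnect_f1_g1.
  exact: fconnect_f1_g2.
rewrite succG_f1; exact: connect_trans (fconnect_g1_f1 _) (fconnect_f1_f1 _ _).
Qed.

End Proposition.

Theorem proposition5p1 (V : finType) (E : rel V) (P : 'I_2 -> 'I_2 -> {set V}) :
  four_partition P ->
  #|P idx1 idx2| = #|P idx2 idx1| ->
  0 < #|P idx1 idx2| ->
  (forall (i : 'I_2) (f g : Jdom #|P idx1 idx2| (P i i) -> V),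
      proper_pair P i f g -> hamiltonian (Jrel E f g)) ->
  hamiltonian E.
Proof.
move=> P_part t_eq t_gt0 hamJ.
have [n2 [n2_inj n2_edge n2_conn]] :=
  hamiltonian_successor (hamJ _ _ _ (proper_pair2 P_part t_eq)).
have [n1 [n1_inj n1_edge n1_conn]] :=
  hamiltonian_successor (hamJ _ _ _ (proper_pair1 P_part t_eq n2_inj)).
exact (succG_hamiltonian P_part n2_inj n2_edge n2_conn n1_inj n1_edge n1_conn t_gt0).
Qed.
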